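(* For any simplicial model $\mathcal{C}$, $\mathcal{C}$ is isomorphic to $\mathtt{SC}(\mathtt{LEM}(\mathcal{C}))$; and for any local epistemic model $\mathcal{M}$, $\mathcal{M}^{pr}$ is isomorphic to $\mathtt{LEM}(\mathtt{SC}(\mathcal{M}))$ (so for any proper local epistemic model $\mathcal{M}$, $\mathcal{M}$ is isomorphic to $\mathtt{LEM}(\mathtt{SC}(\mathcal{M}))$).
   Context: Fix a nonempty finite set $\mathbf{A}$ of agents and a countable set $\mathbf{P}$ of predicate letters. A simplicial model is $\mathcal{C}=(\mathcal{V},C,\chi,\ell)$: $\mathcal{V}\neq\emptyset$; $C\subseteq\wp(\mathcal{V})$ with $\emptyset\notin C$, closed under nonempty subsets, containing all singletons; $\chi:\mathcal{V}\to\mathbf{A}$ injective on every member of $C$; $\ell:\mathbf{P}\to\wp(\mathcal{V})$; facets $\mathcal{F}(C)$ are the inclusion-maximal members of $C$. A first-order Kripke model is $\mathcal{M}=(W,\delta,\{R_a\}_{a\in\mathbf{A}},\rho)$: $W\neq\emptyset$, $\delta:W\to\wp(\mathbf{A})\setminus\{\emptyset\}$, $R_a\subseteq W\times W$ with $R_a(w)=\emptyset$ if $a\notin\delta(w)$, $\rho:\mathbf{P}\times W\to\wp(\mathbf{A})$ with $\rho(p,w)\subseteq\delta(w)$. $\mathcal{M}$ is a local epistemic model if: for each $a$ the restriction of $R_a$ to $\{w\mid a\in\delta(w)\}$ is an equivalence relation; $wR_av$ and $a\in\delta(w)$ imply $a\in\delta(v)$; $wR_av$ and $a\in\rho(p,w)$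 imply $a\in\rho(p,v)$; $v\in\bigcap_{a\in\delta(w)}R_a(w)$ implies $\delta(v)\subseteq\delta(w)$. It is proper if additionally $\bigcap_{a\in\delta(w)}R_a(w)=\{w\}$ for all $w$. Properization: with $[w]_\delta=\bigcap_{a\in\delta(w)}R_a(w)$, $\mathcal{M}^{pr}$ has worlds $\{[w]_\delta\mid w\in W\}$, $\delta^{pr}([w]_\delta)=\delta(w)$, $R^{pr}_a=\{([w]_\delta,[v]_\delta)\mid wR_av\}$, $\rho^{pr}(p,[w]_\delta)=\rho(p,w)$. $\mathtt{LEM}(\mathcal{C})$ has worlds $\mathcal{F}(C)$, $\delta(F)=\chi[F]$, $R_a=\{(F,G)\mid a\in\chi[F\cap G]\}$, $\rho(p,F)=\chi[F\cap\ell(p)]$. For a local epistemic model $\mathcal{M}$, let $[w]_a=R_a(w)$ and $F^{\mathcal M}_w=\{(a,[w]_a)\mid a\in\delta(w)\}$; $\mathtt{SC}(\mathcal{M})$ has vertices $\{(a,[w]_a)\mid w\in W,a\in\delta(w)\}$, faces the nonempty subsets of the sets $F^{\mathcal M}_w$ ($w\in W$), coloring $(a,[w]_a)\mapsto a$, and labeling $\ell(p)=\{(a,[w]_a)\mid a\in\rho(p,w)\}$. An isomorphism of simplicial models $\mathcal{C}\to\mathcal{D}$ is a bijection $g:\mathcal{V}^{\mathcal C}\to\mathcal{V}^{\mathcal D}$ with $X\in C^{\mathcal C}\iff g[X]\in C^{\mathcal D}$, $\chi^{\mathcal D}\circ g=\chi^{\mathcal C}$, and $g[\ell^{\mathcal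 C}(p)]=\ell^{\mathcal D}(p)$ for all $p$. An isomorphism of Kripke models is a bijection $f$ of worlds preserving $\delta$ and $\rho$ (i.e. $\delta'(f(w))=\delta(w)$, $\rho'(p,f(w))=\rho(p,w)$) with $wR_av\iff f(w)R'_af(v)$. *)

From mathcomp Require Import all_boot.
From mathcomp Require Import boolp classical_sets.
Set Implicit Arguments. Unset Strict Implicit. Unset Printing Implicit Defensive.
Local Open Scope classical_set_scope.

Section Models.
Variables (A : finType) (P : countType).

Local Unset Implicit Arguments.
Record smodel := SModel {
  sV : Type;
  sC : set (set sV);
  schi : sV -> A;
  sl : P -> set sV }.

Local Set Implicit Arguments.
Definition is_smodel (C : smodel) : Prop :=
  [/\ (exists v : sV C, True),
      ~ sC C set0,
      (forall X Y, sC C X -> Y `<=` X -> Y !=set0 -> sC C Y),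
      (forall v, sC C [set v]) &
      (forall X, sC C X -> forall u v, X u -> X v -> schi C u = schi C v -> u = v)].

Definition facet (C : smodel) (F : set (sV C)) : Prop :=
  sC C F /\ forall G, sC C G -> F `<=` G -> G = F.

Local Unset Implicit Arguments.
Record kmodel := KModel {
  kW : Type;
  kdelta : kW -> set A;
  kR : A -> kW -> set kW;
  krho : P -> kW -> set A }.

Local Set Implicit Arguments.
Definition is_kmodel (M : kmodel) : Prop :=
  [/\ (exists w : kW M, True),
      (forall w, kdelta M w !=set0),
      (forall a w, ~ kdelta M w a -> kR M a w = set0) &
      (forall p w, krho M p w `<=` kdelta M w)].

Definition dclass (M : kmodel) (w : kW M) : set (kW M) :=
  [set v | forall a, kdelta M w a -> kR M a w v].

Definition is_local_epistemic (M : kmodel) : Prop :=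
  [/\ is_kmodel M,
      (forall a, [/\ (forall w, kdelta M w a -> kR M a w w),
                     (forall w v, kdelta M w a -> kdelta M v a -> kR M a w v -> kR M a v w) &
                     (forall w v u, kdelta M w a -> kdelta M v a -> kdelta M u a ->
                        kR M a w v -> kR M a v u -> kR M a w u)]),
      (forall a w v, kR M a w v -> kdelta M w a -> kdelta M v a),
      (forall a p w v, kR M a w v -> krho M p w a -> krho M p v a) &
      (forall w v, dclass w v -> kdelta M v `<=` kdelta M w)].

Definition is_proper (M : kmodel) : Prop :=
  is_local_epistemic M /\ forall w : kW M, dclass w = [set w].

Definition pr_world (M : kmodel) := {X : set (kW M) | exists w, X = dclass w}.

Definition pr_rep (M : kmodel) (X : pr_world M) : kW M := projT1 (cid (svalP X)).

Definition properization (M : kmodel) : kmodel :=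
  @KModel (pr_world M)
    (fun X => kdelta M (pr_rep X))
    (fun a X Y => exists w v, sval X = dclass w /\ sval Y = dclass v /\ kR M a w v)
    (fun p X => krho M p (pr_rep X)).

Definition LEM (C : smodel) : kmodel :=
  @KModel {F : set (sV C) | facet F}
    (fun F => schi C @` sval F)
    (fun a F G => (schi C @` (sval F `&` sval G)) a)
    (fun p F => schi C @` (sval F `&` sl C p)).

Definition SC_vertex (M : kmodel) :=
  {x : A * set (kW M) | exists w, kdelta M w x.1 /\ x.2 = kR M x.1 w}.

Definition SC_facet (M : kmodel) (w : kW M) : set (SC_vertex M) :=
  [set x | kdelta M w (sval x).1 /\ (sval x).2 = kR M (sval x).1 w].

Definition SC (M : kmodel) : smodel :=
  @SModel (SC_vertex M)
    [set X | X !=set0 /\ exists w, X `<=` SC_facet w]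
    (fun x => (sval x).1)
    (fun p => [set x | exists w, krho M p w (sval x).1 /\ (sval x).2 = kR M (sval x).1 w]).

Definition siso (C D : smodel) : Prop :=
  exists g : sV C -> sV D,
    [/\ bijective g,
        (forall X, sC C X <-> sC D (g @` X)),
        (forall v, schi D (g v) = schi C v) &
        (forall p, g @` sl C p = sl D p)].

Definition kiso (M N : kmodel) : Prop :=
  exists f : kW M -> kW N,
    [/\ bijective f,
        (forall w, kdelta N (f w) = kdelta M w),
        (forall p w, krho N p (f w) = krho M p w) &
        (forall a w v, kR M a w v <-> kR N a (f w) (f v))].

End Models.

From mathcomp Require Import all_boot.
From mathcomp Require Import boolp classical_sets functions.
Set Implicit Arguments. Unset Strict Implicit. Unset Printing Implicit Defensive.
Local Open Scope classical_set_scope.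

(* For a local epistemic model M, the facet F^M_w of SC(M) carries exactly the
   information of the class [w]_delta: F^M_w is contained in F^M_v iff v lies
   in [w]_delta.  Hence the facets F^M_w are pairwise incomparable, every
   facet of SC(M) is one of them, and w |-> F^M_w induces an isomorphism
   M^pr ~ LEM(SC(M)); a proper model is isomorphic to its properization.
   For a simplicial model C, every face lies in a facet (there are finitely
   many colours), and for a facet F containing a vertex v the chi(v)-class of
   F in LEM(C) is the set of all facets containing v.  So
   v |-> (chi(v), [F]_chi(v)) does not depend on F, and injectivity of the
   colouring on faces makes it an isomorphism C ~ SC(LEM(C)). *)

Arguments sV {A P}. Arguments sC {A P}. Arguments schi {A P}. Arguments sl {A P}.
Arguments kW {A P}. Arguments kdelta {A P}. Arguments kR {A P}. Arguments krho {A P}.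

Lemma bijective_inj_surj (T U : Type) (f : T -> U) :
  injective f -> (forall y, exists x, f x = y) -> bijective f.
Proof.
move=> f_inj f_surj; rewrite -setTT_bijective; split=> // [x y _ _ /f_inj //|y _].
by have [x <-] := f_surj y; exists x.
Qed.

Section KripkeIsomorphisms.
Variables (A : finType) (P : countType).

Lemma kiso_trans (M N O : kmodel A P) : kiso M N -> kiso N O -> kiso M O.
Proof.
move=> [f [f_bij f_delta f_rho f_R]] [g [g_bij g_delta g_rho g_R]].
exists (g \o f); split=> [|w|p w|a w v] /=.
- exact: bij_comp.
- by rewrite g_delta f_delta.
- by rewrite g_rho f_rho.
- by rewrite f_R g_R.
Qed.

Definition pr_of (M : kmodel A P) (w : kW M) : pr_world M :=
  exist _ (dclass w) (ex_intro _ w erefl).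

Lemma pr_repP (M : kmodel A P) (X : pr_world M) : sval X = dclass (pr_rep X).
Proof. exact: projT2 (cid (svalP X)). Qed.

Lemma pr_world_inj (M : kmodel A P) (X Y : pr_world M) : sval X = sval Y -> X = Y.
Proof. by case: X Y => [X pX] [Y pY] /= XY; apply: eq_exist. Qed.

Lemma kiso_properization (M N : kmodel A P) (f : kW M -> kW N) :
  (forall w v, f w = f v <-> dclass w = dclass v) ->
  (forall y, exists w, f w = y) ->
  (forall w, kdelta N (f w) = kdelta M w) ->
  (forall p w, krho N p (f w) = krho M p w) ->
  (forall a w v, kR M a w v <-> kR N a (f w) (f v)) ->
  kiso (properization M) N.
Proof.
move=> f_eq f_surj f_delta f_rho f_R.
have f_rep X w : sval X = dclass w -> f (pr_rep X) = f w.
  by move=> Xw; apply/f_eq; rewrite -pr_repP.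
exists (fun X => f (pr_rep X)); split=> [|X|p X|a X Y] //=.
- apply: bijective_inj_surj => [X Y /f_eq XY|y].
    by apply: pr_world_inj; rewrite !pr_repP XY.
  by have [w <-] := f_surj y; exists (pr_of w); apply: f_rep.
- split=> [[w [v [Xw [Yv wRv]]]]|XRY].
    by rewrite (f_rep _ _ Xw) (f_rep _ _ Yv) -f_R.
  by exists (pr_rep X), (pr_rep Y); rewrite -!pr_repP f_R.
Qed.

Lemma kiso_proper_properization (M : kmodel A P) :
  is_proper M -> kiso M (properization M).
Proof.
move=> [_ dclass1].
have dclass_inj (w v : kW M) : dclass w = dclass v -> w = v.
  by rewrite !dclass1 => /(congr1 (@^~ w)); rewrite /= => <-.
have rep_of (w : kW M) : pr_rep (pr_of w) = w.
  by apply: dclass_inj; rewrite -pr_repP.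
exists (@pr_of M); split=> [|w|p w|a w v] /=; rewrite ?rep_of //.
- apply: bijective_inj_surj => [w v /(congr1 sval)/dclass_inj //|X].
  by exists (pr_rep X); apply: pr_world_inj; rewrite /= -pr_repP.
- split=> [wRv|[w' [v' [/dclass_inj -> [/dclass_inj -> //]]]]].
  by exists w, v.
Qed.

End KripkeIsomorphisms.

Section SCOfLocalEpistemic.
Variables (A : finType) (P : countType) (M : kmodel A P).
Hypothesis HM : is_local_epistemic M.

Lemma kR_refl a (w : kW M) : kdelta M w a -> kR M a w w.
Proof. by case: HM => _ /(_ a) [R_refl _ _] _ _ _; apply: R_refl. Qed.

Lemma kR_char a (w v : kW M) :
  kR M a w v <-> [/\ kdelta M w a, kdelta M v a & kR M a w = kR M a v].
Proof.
case: HM => [[_ _ R_out _] /(_ a) [_ R_sym R_trans] R_delta _ _].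
have delta_w : kR M a w v -> kdelta M w a.
  by move=> wRv; apply: contrapT => /R_out E; rewrite E in wRv.
split=> [wRv|[dw dv ->]]; last exact: kR_refl.
have [dw dv] := (delta_w wRv, R_delta _ _ _ wRv (delta_w wRv)).
split=> //; rewrite predeqE => u; split=> [wRu|vRu].
- by apply: (R_trans v w u) => //; [exact: R_delta wRu dw | exact: R_sym].
- by apply: (R_trans w v u) => //; exact: R_delta vRu dv.
Qed.

Lemma dclass_refl (w : kW M) : dclass w w.
Proof. by move=> a; apply: kR_refl. Qed.

Lemma dclass_sym (w v : kW M) : dclass w v -> dclass v w.
Proof.
case: HM => _ _ _ _ dclass_delta wv a dv.
have /kR_char [dw _ Ewv] := wv a (dclass_delta _ _ wv _ dv).
by apply/kR_char; split=> //; rewrite Ewv.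
Qed.

Definition SC_vertex_of (w : kW M) a (da : kdelta M w a) : SC_vertex M :=
  exist _ (a, kR M a w) (ex_intro _ w (conj da erefl)).

Lemma SC_vertex_of_facet (w : kW M) a (da : kdelta M w a) :
  SC_facet w (SC_vertex_of da).
Proof. by []. Qed.

Lemma SC_facet_subP (w v : kW M) : SC_facet w `<=` SC_facet v <-> dclass w v.
Proof.
split=> [wv a da|wv x [dx Ex]].
  have [/= dv Ewv] := wv _ (SC_vertex_of_facet da).
  by apply/kR_char.
by have /kR_char [_ dv Ewv] := wv _ dx; split=> //; rewrite Ex.
Qed.

Lemma dclass_SC_facet (w v : kW M) : dclass w = dclass v <-> SC_facet w = SC_facet v.
Proof.
split=> [Ewv|Ewv]; last by rewrite predeqE => u; rewrite -!SC_facet_subP Ewv.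
by rewrite eqEsubset; split; apply/SC_facet_subP; [rewrite Ewv | rewrite -Ewv];
  exact: dclass_refl.
Qed.

Lemma SC_facet_facet (w : kW M) : facet (SC_facet w : set (sV (SC M))).
Proof.
case: HM => [[_ delta_neq0 _ _] _ _ _ dclass_delta].
split=> [|G [_ [v Gv]] wG].
  split; last by exists w.
  by have [a da] := delta_neq0 w; exists (SC_vertex_of da).
have /SC_facet_subP wv : SC_facet w `<=` SC_facet v by apply: subset_trans Gv.
rewrite eqEsubset; split=> //; apply: subset_trans Gv _.
exact/SC_facet_subP/dclass_sym.
Qed.

Lemma facet_SC (G : set (sV (SC M))) : facet G -> exists w, G = SC_facet w.
Proof.
case=> [[_ [w Gw]] G_max]; exists w; apply/esym/G_max => //.
by case: (SC_facet_facet w).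
Qed.

Definition SC_facet_world (w : kW M) : kW (LEM (SC M)) :=
  exist _ (SC_facet w) (SC_facet_facet w).

Lemma SC_facet_world_eq (w v : kW M) :
  SC_facet_world w = SC_facet_world v <-> dclass w = dclass v.
Proof.
rewrite dclass_SC_facet; split=> [/(congr1 sval) //|Ewv].
exact: eq_exist.
Qed.

Lemma SC_facet_world_surj (W : kW (LEM (SC M))) : exists w, SC_facet_world w = W.
Proof.
case: W => G facetG; have [w Gw] := facet_SC facetG.
by exists w; apply: eq_exist.
Qed.

Lemma SC_facet_world_delta (w : kW M) :
  kdelta (LEM (SC M)) (SC_facet_world w) = kdelta M w.
Proof.
rewrite predeqE => a /=; split=> [[x [dx _] <-] //|da].
by exists (SC_vertex_of da).
Qed.

Lemma SC_facet_world_rho p (w : kW M) :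
  krho (LEM (SC M)) p (SC_facet_world w) = krho M p w.
Proof.
case: HM => [[_ _ _ rho_delta] _ _ rho_R _].
rewrite predeqE => a /=; split=> [[x [[dx Ex] [u [rux Eu]]] <-]|ra].
  by apply: rho_R rux; rewrite -Eu Ex; exact: kR_refl.
have da := rho_delta _ _ _ ra.
by exists (SC_vertex_of da) => //; split; [exact: SC_vertex_of_facet | exists w].
Qed.

Lemma SC_facet_world_R a (w v : kW M) :
  kR M a w v <-> kR (LEM (SC M)) a (SC_facet_world w) (SC_facet_world v).
Proof.
rewrite kR_char /=; split=> [[dw dv Ewv]|[x [[dx Ex] [dv Ev]] <-]].
  by exists (SC_vertex_of dw) => //; split=> //; split.
by split=> //; rewrite -Ex -Ev.
Qed.

Lemma properization_LEM_SC : kiso (properization M) (LEM (SC M)).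
Proof.
apply: (kiso_properization (f := SC_facet_world)).
- exact: SC_facet_world_eq.
- exact: SC_facet_world_surj.
- exact: SC_facet_world_delta.
- exact: SC_facet_world_rho.
- exact: SC_facet_world_R.
Qed.

End SCOfLocalEpistemic.

Section LEMOfSimplicial.
Variables (A : finType) (P : countType) (C : smodel A P).
Hypothesis HC : is_smodel C.

Definition colours (X : set (sV C)) : {set A} := [set a | `[< (schi C @` X) a >]].

(* A face with the largest number of colours among the faces containing X is
   a facet: a larger face has the same colours, so colour-injectivity makes it
   equal. *)
Lemma face_sub_facet (X : set (sV C)) : sC C X -> exists2 F, facet F & X `<=` F.
Proof.
case: HC => _ _ _ _ chi_inj XC.
pose ncol n := `[< exists2 Y, sC C Y & X `<=` Y /\ #|colours Y| = n >].
have ncolX : exists n, ncol n.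
  by exists #|colours X|; apply/asboolP; exists X => //; split.
have ncol_le n : ncol n -> n <= #|A|.
  by move=> /asboolP [Y _ [_ <-]]; apply: max_card.
have [m /asboolP [Y YC [XY colY]] m_max] := ex_maxnP ncolX ncol_le.
exists Y => //; split=> // G GC YG.
have colYG : colours Y = colours G.
  apply/eqP; rewrite eqEcard colY m_max; last first.
    by apply/asboolP; exists G => //; split=> //; apply: subset_trans YG.
  rewrite andbT; apply/fintype.subsetP => a; rewrite !inE => -[y Yy <-].
  by apply/imageP/YG.
rewrite eqEsubset; split=> // g Gg.
have : schi C g \in colours G by rewrite inE; apply/asboolP/imageP.
rewrite -colYG inE => /asboolP [y Yy Eyg].
by rewrite -(chi_inj _ GC _ _ (YG _ Yy) Gg Eyg).
Qed.

Lemma facet_of_vertex (v : sV C) : exists W : kW (LEM C), sval W v.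
Proof.
case: HC => _ _ _ vertexC _.
have [F facetF vF] := face_sub_facet (vertexC v).
by exists (exist _ F facetF); apply: vF.
Qed.

Lemma LEM_facet_face (W : kW (LEM C)) : sC C (sval W).
Proof. by case: (svalP W). Qed.

Lemma LEM_R_vertex (W : kW (LEM C)) v :
  sval W v -> kR (LEM C) (schi C v) W = [set G | sval G v].
Proof.
case: HC => _ _ _ _ chi_inj Wv; rewrite predeqE => G /=.
split=> [[u [Wu Gu] Euv]|Gv]; last by exists v.
by rewrite -(chi_inj _ (LEM_facet_face W) u v).
Qed.

Definition LEM_vertex (v : sV C) : sV (SC (LEM C)).
Proof.
exists (schi C v, [set G : kW (LEM C) | sval G v]).
have [W Wv] := facet_of_vertex v.
by exists W; split; [exists v | exact/esym/LEM_R_vertex].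
Defined.

Lemma LEM_vertexE (W : kW (LEM C)) u (y : sV (SC (LEM C))) : sval W u ->
  sval y = (schi C u, kR (LEM C) (schi C u) W) -> y = LEM_vertex u.
Proof.
move=> Wu; rewrite (LEM_R_vertex Wu).
by case: y => y py /= Ey; apply: eq_exist.
Qed.

Lemma SC_facet_LEM (W : kW (LEM C)) (y : sV (SC (LEM C))) :
  SC_facet W y -> exists2 u, sval W u & y = LEM_vertex u.
Proof.
move=> [[u Wu Eu] Ey]; exists u => //; apply: (LEM_vertexE Wu).
by rewrite Eu -Ey; case: (sval y).
Qed.

Lemma LEM_vertex_inj : injective LEM_vertex.
Proof.
case: HC => _ _ _ _ chi_inj u v /(congr1 sval) [Euv Estar].
have [W Wu] := facet_of_vertex u.
have Wv : sval W v by move/(congr1 (@^~ W)): Estar => /= <-.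
exact: chi_inj _ (LEM_facet_face W) u v Wu Wv Euv.
Qed.

Lemma LEM_vertex_in_SC_facet (W : kW (LEM C)) v :
  SC_facet W (LEM_vertex v) <-> sval W v.
Proof.
split=> [/SC_facet_LEM [u Wu /LEM_vertex_inj -> //]|Wv].
by split; [exists v | exact/esym/LEM_R_vertex].
Qed.

Lemma LEM_vertex_surj (y : sV (SC (LEM C))) : exists v, LEM_vertex v = y.
Proof. by have [W Wy] := svalP y; have [v _ ->] := SC_facet_LEM Wy; exists v. Qed.

Lemma LEM_vertex_face (X : set (sV C)) :
  sC C X <-> sC (SC (LEM C)) (LEM_vertex @` X).
Proof.
case: HC => _ set0_face face_sub _ _.
split=> [XC|[[_ [x Xx _]] [W XW]]].
  have [F facetF XF] := face_sub_facet XC.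
  have /set0P [x Xx] : X != set0 by apply/eqP => X0; rewrite X0 in XC.
  split; first by exists (LEM_vertex x), x.
  by exists (exist _ F facetF) => _ [y Xy <-]; apply/LEM_vertex_in_SC_facet/XF.
apply: (face_sub (sval W)); first exact: LEM_facet_face.
  by move=> y Xy; apply/LEM_vertex_in_SC_facet/XW; exists y.
by exists x.
Qed.

Lemma LEM_vertex_label p : LEM_vertex @` sl C p = sl (SC (LEM C)) p.
Proof.
rewrite predeqE => y; split=> [[v lv <-]|[W [[u [Wu lu] Eu] Ey]]].
  have [W Wv] := facet_of_vertex v.
  by exists W; split; [exists v | exact/esym/LEM_R_vertex].
exists u => //; apply/esym/(LEM_vertexE Wu).
by rewrite Eu -Ey; case: (sval y).
Qed.

Lemma SC_LEM_iso : siso C (SC (LEM C)).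
Proof.
exists LEM_vertex; split=> //.
- exact: bijective_inj_surj LEM_vertex_inj LEM_vertex_surj.
- exact: LEM_vertex_face.
- exact: LEM_vertex_label.
Qed.

End LEMOfSimplicial.

Theorem proposition3 (A : finType) (hA : 0 < #|A|) (P : countType) :
  (forall C : smodel A P, is_smodel C -> siso C (SC (LEM C))) /\
  (forall M : kmodel A P, is_local_epistemic M ->
      kiso (properization M) (LEM (SC M))) /\
  (forall M : kmodel A P, is_proper M -> kiso M (LEM (SC M))).
Proof.
split; first exact: SC_LEM_iso.
split; first exact: properization_LEM_SC.
move=> M M_proper; apply: kiso_trans (kiso_proper_properization M_proper) _.
by apply: properization_LEM_SC; case: M_proper.
Qed.
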